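(* For any $n\ge 1$ and any $u\in\mathsf{Tr}(n)$, $\mathrm{in}(u)+\mathrm{out}(u)=n$, where $\mathrm{in}(u)$ (resp. $\mathrm{out}(u)$) is the number of elements of $\mathsf{Tr}(n)$ covered by (resp. covering) $u$.
   Context: A triword of size $n$ is a word $u=u_1\cdots u_n$ with $u_i\in\{0,1,2\}$, $u_1\ne 2$, and such that $u_i=0$ implies $u_j\neq 1$ for all $j>i$; $\mathsf{Tr}(n)$ is their set, ordered componentwise ($u\preccurlyeq v$ iff $u_i\le v_i$ for all $i$). *)

From mathcomp Require Import all_boot.
Set Implicit Arguments. Unset Strict Implicit. Unset Printing Implicit Defensive.

(* Words of size n over {0,1,2}: n.-tuple 'I_3; letter u_i is tnth u i (0-indexed). *)
Definition word n := n.-tuple 'I_3.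

Definition triword n (u : word n) : bool :=
  (if n is _.+1 then nat_of_ord (nth ord0 u 0) != 2 else true) &&
  [forall i : 'I_n, forall j : 'I_n,
     ((i < j) && (nat_of_ord (tnth u i) == 0)) ==> (nat_of_ord (tnth u j) != 1)].

Definition wle n (u v : word n) : bool :=
  [forall i : 'I_n, nat_of_ord (tnth u i) <= nat_of_ord (tnth v i)].

Definition wlt n (u v : word n) : bool := (u != v) && wle u v.

Definition tcovers n (v u : word n) : bool :=
  [&& triword u, triword v, wlt u v &
      [forall w : word n, ~~ [&& triword w, wlt u w & wlt w v]]].

Definition tr_in n (u : word n) : nat := #|[pred v : word n | tcovers u v]|.
Definition tr_out n (u : word n) : nat := #|[pred v : word n | tcovers v u]|.

From mathcomp Require Import all_boot zify.
Set Implicit Arguments. Unset Strict Implicit. Unset Printing Implicit Defensive.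

(* If u < v are triwords, changing in u the first letter where u and v differ
   to its value in v gives again a triword.  Hence covering pairs of Tr(n)
   differ in exactly one letter, and the neighbours of u in the Hasse diagram
   are the one-letter changes u_i -> c that give a triword and jump over no
   triword.  A 0 or a 2 has exactly one such change (to 1 when no 0 precedes
   it, otherwise to the other of 0, 2); a 1 at a position i > 0 can always be
   raised to 2; and a 1 can be lowered to 0 exactly when it is the last 1.
   A leading 1 cannot be raised, so charging the lowering of the last 1 to
   position 0 matches positions with neighbours (if u starts with 0 instead,
   it contains no 1 at all). *)

Section Words.

Variable n : nat.
Implicit Types (u v w x : word n) (i j k : 'I_n) (c d : 'I_3).

Definition letter u i : nat := tnth u i.

Definition upd u i c : word n := [tuple if j == i then c else tnth u j | j < n].

Lemma letter_upd u i c j : letter (upd u i c) j = if j == i then c : nat else letter u j.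
Proof. by rewrite /letter tnth_mktuple; case: (j == i). Qed.

Lemma letter_lt3 u i : letter u i < 3.
Proof. exact: ltn_ord. Qed.

Lemma word_eqP u v : reflect (forall i, letter u i = letter v i) (u == v).
Proof.
apply: (iffP eqP) => [-> //|E]; apply: eq_from_tnth => i; apply: val_inj; exact: E.
Qed.

Lemma wleP u v : reflect (forall i, letter u i <= letter v i) (wle u v).
Proof. exact: forallP. Qed.

Lemma upd_id u i : upd u i (tnth u i) = u.
Proof. by apply/eqP/word_eqP => j; rewrite letter_upd; case: eqP => [->|]. Qed.

Lemma upd_upd u i c d : upd (upd u i c) i d = upd u i d.
Proof. by apply/eqP/word_eqP => j; rewrite !letter_upd; case: (j == i). Qed.

Lemma wle_upd2 u i c d : wle (upd u i c) (upd u i d) = (c <= d).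
Proof.
apply/wleP/idP => [/(_ i)|cd j]; first by rewrite !letter_upd eqxx.
by rewrite !letter_upd; case: (j == i).
Qed.

Lemma eq_upd2 u i c d : (upd u i c == upd u i d) = (c == d).
Proof.
apply/eqP/eqP => [E|-> //]; apply: val_inj.
by move: (letter_upd u i c i) (letter_upd u i d i); rewrite E !eqxx => ->.
Qed.

Lemma wlt_upd2 u i c d : wlt (upd u i c) (upd u i d) = (c < d).
Proof. by rewrite /wlt wle_upd2 eq_upd2 ltn_neqAle -val_eqE. Qed.

Lemma wlt_upd u i c : wlt u (upd u i c) = (letter u i < c).
Proof. by rewrite -{1}(upd_id u i) wlt_upd2. Qed.

Lemma wle_sandwich_upd x w i c : wle x w -> wle w (upd x i c) -> w = upd x i (tnth w i).
Proof.
move=> /wleP xw /wleP wy; apply/eqP/word_eqP => j; rewrite letter_upd.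
case: eqP => [-> //|/eqP ji]; have := xw j; have := wy j; rewrite letter_upd (negbTE ji).
lia.
Qed.

Lemma wlt_antisym u v : wlt u v -> ~~ wlt v u.
Proof.
move=> /andP[uv /wleP le_uv]; apply/andP => -[_ /wleP le_vu]; move/negP: uv; apply.
by apply/word_eqP => i; apply/eqP; rewrite eqn_leq le_uv le_vu.
Qed.

Lemma tcovers_updP x i c :
  tcovers (upd x i c) x <->
  [/\ triword x, triword (upd x i c), letter x i < c &
      forall d, letter x i < d < c -> ~~ triword (upd x i d)].
Proof.
rewrite /tcovers wlt_upd; split.
  move=> /and4P[Tx Ty xy /forallP gap]; split=> // d xdy; apply/negP => Td.
  move/andP: xdy => [xd dy].
  by have := gap (upd x i d); rewrite Td wlt_upd wlt_upd2 xd dy.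
move=> [Tx Ty xy gap]; rewrite Tx Ty xy; apply/forallP => w.
apply/and3P => -[Tw xw wy].
have Ew := wle_sandwich_upd (proj2 (andP xw)) (proj2 (andP wy)).
move: xw wy Tw; rewrite Ew wlt_upd wlt_upd2 => xw wy.
by apply/negP/gap; rewrite xw.
Qed.

Lemma triwordP u :
  reflect ((forall i, i = 0 :> nat -> letter u i != 2) /\
           (forall i j, i < j -> letter u i = 0 -> letter u j != 1))
          (triword u).
Proof.
rewrite /triword /letter; case: n u => [|m] u.
  by apply: (iffP idP) => [_|_]; [split=> -[] | apply/forallP => -[]].
have -> : nth ord0 u 0 = tnth u ord0 by rewrite (tnth_nth ord0).
apply: (iffP andP) => -[first later]; split.
- by move=> i i0; have -> : i = ord0 by apply: val_inj.
- move=> i j ij ui; move/forallP/(_ i)/forallP/(_ j): later.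
  by rewrite ij ui.
- exact: first ord0 erefl.
- apply/forallP => i; apply/forallP => j; apply/implyP => /andP[ij /eqP ui].
  exact: later ij ui.
Qed.

Definition zero_before u i : bool := [exists k : 'I_n, (k < i) && (letter u k == 0)].

Definition one_after u i : bool := [exists l : 'I_n, (i < l) && (letter u l == 1)].

Lemma zero_beforeP u i : reflect (exists2 k : 'I_n, k < i & letter u k = 0) (zero_before u i).
Proof.
apply: (iffP existsP) => [[k /andP[ki /eqP uk]]|[k ki uk]]; first by exists k.
by exists k; rewrite ki uk.
Qed.

Lemma one_afterP u i : reflect (exists2 l : 'I_n, i < l & letter u l = 1) (one_after u i).
Proof.
apply: (iffP existsP) => [[l /andP[il /eqP ul]]|[l il ul]]; first by exists l.
by exists l; rewrite il ul.
Qed.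

Lemma zero_before_neq0 u i : zero_before u i -> i != 0 :> nat.
Proof. by case/zero_beforeP => k ki _; rewrite -lt0n (leq_ltn_trans _ ki). Qed.

Lemma zero_before_no_one_after u i :
  triword u -> zero_before u i -> ~~ one_after u i.
Proof.
move=> /triwordP[_ Tu] /zero_beforeP[k ki uk]; apply/one_afterP => -[l il ul].
by move: (Tu k l (ltn_trans ki il) uk); rewrite ul.
Qed.

Lemma triword_upd u i c :
  triword u ->
  triword (upd u i c) =
  [&& (i == 0 :> nat) ==> (c != 2 :> nat),
      (c == 0 :> nat) ==> ~~ one_after u i &
      (c == 1 :> nat) ==> ~~ zero_before u i].
Proof.
move=> /triwordP[first later]; apply/triwordP/and3P.
  move=> [first' later']; split.
  - by apply/implyP => /eqP i0; move: (first' i i0); rewrite letter_upd eqxx.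
  - apply/implyP => /eqP c0; apply/one_afterP => -[l il ul].
    move: (later' i l il); rewrite !letter_upd eqxx c0 -val_eqE (gtn_eqF il) ul.
    by move/(_ erefl).
  - apply/implyP => /eqP c1; apply/zero_beforeP => -[k ki uk].
    move: (later' k i ki); rewrite !letter_upd eqxx -val_eqE (ltn_eqF ki) uk c1.
    by move/(_ erefl).
move=> [/implyP first' /implyP later' /implyP earlier']; split.
  move=> j j0; rewrite letter_upd; case: (j =P i) => [ji|_]; last exact: first.
  by apply: first'; rewrite -ji j0.
move=> j k jk; rewrite !letter_upd.
case: (j =P i) => [ji|_]; case: (k =P i) => [ki|_].
- by move: jk; rewrite ji ki ltnn.
- move=> /eqP c0; apply/eqP => uk; move/one_afterP: (later' c0); apply.
  by exists k; rewrite -?ji.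
- move=> uj; apply/eqP => /eqP c1; move/zero_beforeP: (earlier' c1); apply.
  by exists j; rewrite -?ki.
- exact: later.
Qed.

Lemma triword_upd1 u i c : triword u -> c = 1 :> nat -> triword (upd u i c) = ~~ zero_before u i.
Proof. by move=> Tu c1; rewrite triword_upd // c1 /= implybT. Qed.

Lemma exists_neq_letter u v : u != v -> exists i, letter u i != letter v i.
Proof.
move=> /word_eqP uv; apply/existsP; apply: contra_notT uv => /existsPn same i.
by apply/eqP; rewrite -[_ == _]negbK same.
Qed.

Lemma tcovers_upd_tnth u v : tcovers v u -> exists i, v = upd u i (tnth v i).
Proof.
move=> /and4P[Tu Tv /andP[uv /wleP le_uv] /forallP gap].
have [i0 ne_i0] := exists_neq_letter uv.
case: (@arg_minnP _ i0 (fun k => letter u k != letter v k) (@nat_of_ord n) ne_i0)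
  => i ne_i first_ne.
have same_before k : k < i -> letter u k = letter v k.
  by move=> ki; apply/eqP; apply: contraTT ki => /first_ne; rewrite -leqNgt.
have lt_uv_i : letter u i < letter v i by rewrite ltn_neqAle ne_i le_uv.
have Tw : triword (upd u i (tnth v i)).
  rewrite triword_upd //; move/triwordP: Tv => [firstv laterv].
  apply/and3P; split; apply/implyP => /eqP vi.
  - exact: firstv.
  - by move: lt_uv_i; rewrite /letter vi.
  - apply/zero_beforeP => -[k ki uk].
    by move: (laterv k i ki); rewrite -same_before // uk /letter vi => /(_ erefl).
have le_wv : wle (upd u i (tnth v i)) v.
  by apply/wleP => j; rewrite letter_upd; case: eqP => [-> //|_]; apply: le_uv.
exists i; apply/eqP; apply: contraT => ne_wv.
by move: (gap (upd u i (tnth v i))); rewrite Tw wlt_upd lt_uv_i /wlt eq_sym ne_wv le_wv.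
Qed.

Definition cover_step u i c : Prop :=
  [/\ c != tnth u i, triword (upd u i c) &
      forall d, (letter u i < d < c) || (c < d < letter u i) -> ~~ triword (upd u i d)].

Definition adjacent u v : bool := tcovers v u || tcovers u v.

Lemma adjacentP u v :
  triword u -> adjacent u v <-> exists i c, cover_step u i c /\ v = upd u i c.
Proof.
move=> Tu; split.
  case/orP=> [cov|cov]; have [i Ei] := tcovers_upd_tnth cov.
    exists i, (tnth v i); split=> //.
    move: cov; rewrite {1}Ei => /tcovers_updP[_ Tv lt_i gap].
    split=> // [|d /orP[/gap //|/andP[vd du]]]; first by rewrite -val_eqE gtn_eqF.
    by move: (ltn_trans vd du); rewrite ltnNge ltnW.
  have Ev : v = upd u i (tnth v i) by rewrite Ei upd_upd upd_id.
  exists i, (tnth v i); split=> //.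
  move: cov; rewrite {1}Ei => /tcovers_updP[Tv _ lt_i gap].
  split=> [||d /orP[/andP[ud dv]|dv_du]]; first by rewrite -val_eqE ltn_eqF.
  - by rewrite -Ev.
  - by move: (ltn_trans ud dv); rewrite ltnNge ltnW.
  - by rewrite {1}Ei upd_upd; apply: gap.
move=> [i [c [[ne Tc gap] ->]]]; rewrite /adjacent.
case: (ltngtP (letter u i) c) => [lt_i|lt_i|eq_i].
- by apply/orP; left; apply/tcovers_updP; split=> // d ud; rewrite gap ?ud.
- apply/orP; right; rewrite -{1}(upd_id u i) -(upd_upd u i c).
  apply/tcovers_updP; rewrite !upd_upd upd_id letter_upd eqxx; split=> // d cd.
  by rewrite upd_upd gap ?cd ?orbT.
- by move: ne; rewrite -val_eqE /= -eq_i eqxx.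
Qed.

Definition cover_stepb u i c : bool :=
  match letter u i, val c with
  | 0, 1 | 2, 1 => ~~ zero_before u i
  | 0, 2 | 2, 0 => zero_before u i
  | 1, 0 => ~~ one_after u i
  | 1, 2 => i != 0 :> nat
  | _, _ => false
  end.

Lemma cover_stepP u i c : triword u -> cover_step u i c <-> cover_stepb u i c.
Proof.
move=> Tu; rewrite /cover_step /cover_stepb -val_eqE /= -/(letter u i).
have gap_02 (a b : nat) : a + b = 2 -> a != 1 ->
    (forall d, (a < d < b) || (b < d < a) -> ~~ triword (upd u i d)) <-> zero_before u i.
  move=> ab a1; split=> [|zb d dab].
    by move/(_ (Ordinal (isT : 1 < 3))); rewrite triword_upd1 // negbK /=; apply; lia.
  by rewrite triword_upd1 ?negbK //; lia.
have := letter_lt3 u i.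
case: c => -[|[|[|//]]] c3 /=; case: (letter u i) => [|[|[|//]]] _ /=;
  try by split=> [[]|].
all: rewrite triword_upd //= ?implybT ?implybF ?andbT /=.
(* The changes 2 -> 0 and 0 -> 2, which jump over the letter 1. *)
2: by split=> [[_ _ /(gap_02 2 0 erefl isT)] //|zb]; split=> //;
     [exact: zero_before_no_one_after Tu zb | exact/(gap_02 2 0 erefl isT)].
4: by split=> [[_ _ /(gap_02 0 2 erefl isT)] //|zb]; split=> //;
     [exact: zero_before_neq0 zb | exact/(gap_02 0 2 erefl isT)].
all: by split=> [[] //|Tc]; split=> // d /orP[] /andP[] *; exfalso; lia.
Qed.

Definition last_one u j : 'I_n := [arg max_(k > j | letter u k == 1) k].

Lemma last_oneP u j :
  letter u j = 1 -> letter u (last_one u j) = 1 /\ ~~ one_after u (last_one u j).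
Proof.
move=> /eqP uj; rewrite /last_one.
case: (@arg_maxnP _ j (fun k => letter u k == 1) (@nat_of_ord n) uj) => L /eqP uL maxL.
split=> //; apply/one_afterP => -[l Ll /eqP ul].
by move: (maxL l ul) => /=; rewrite leqNgt Ll.
Qed.

Lemma last_one_eq u j i :
  letter u j = 1 -> letter u i = 1 -> ~~ one_after u i -> last_one u j = i.
Proof.
move=> uj ui /one_afterP last_i; have [uL /one_afterP last_L] := last_oneP uj.
apply: val_inj; case: (ltngtP (last_one u j) i) => // [Li|iL].
- by case: last_L; exists i.
- by case: last_i; exists (last_one u j).
Qed.

Definition initial_one u j : bool := (j == 0 :> nat) && (letter u j == 1).

Definition step_of u j : 'I_n * 'I_3 :=
  match letter u j with
  | 0 => (j, inord (if zero_before u j then 2 else 1))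
  | 1 => if j == 0 :> nat then (last_one u j, inord 0) else (j, inord 2)
  | _ => (j, inord (if zero_before u j then 0 else 1))
  end.

Lemma step_of_initial_one u j : initial_one u j -> step_of u j = (last_one u j, inord 0).
Proof. by case/andP => j0 /eqP uj; rewrite /step_of uj j0. Qed.

Lemma step_of_not_initial_one u j :
  ~~ initial_one u j -> (step_of u j).1 = j /\ (letter u j = 1 -> val (step_of u j).2 = 2).
Proof.
rewrite /initial_one /step_of; case: (letter u j) => [|[|k]] //=.
by rewrite andbT => /negbTE ->; split=> // _; rewrite inordK.
Qed.

Lemma step_of_inj u : injective (step_of u).
Proof.
have cross j1 j2 : initial_one u j1 -> ~~ initial_one u j2 -> step_of u j1 != step_of u j2.
  move=> s1 s2; have [fst2 snd2] := step_of_not_initial_one s2.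
  have [uL _] := last_oneP (eqP (proj2 (andP s1))).
  apply/eqP; rewrite (step_of_initial_one s1) => E.
  have j2L : j2 = last_one u j1 by rewrite -fst2 -E.
  by move: snd2; rewrite -E /= inordK // j2L => /(_ uL).
move=> j1 j2 E.
case: (boolP (initial_one u j1)) => s1; case: (boolP (initial_one u j2)) => s2.
- by apply/eqP; rewrite -val_eqE /= (eqP (proj1 (andP s1))) (eqP (proj1 (andP s2))).
- by move: (cross _ _ s1 s2); rewrite E eqxx.
- by move: (cross _ _ s2 s1); rewrite E eqxx.
- by rewrite -(proj1 (step_of_not_initial_one s1)) E (proj1 (step_of_not_initial_one s2)).
Qed.

Lemma cover_stepb_step_of u j : cover_stepb u (step_of u j).1 (step_of u j).2.
Proof.
rewrite /step_of; have := letter_lt3 u j.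
case uj: (letter u j) => [|[|[|//]]] _.
- by case zb: (zero_before u j); rewrite /cover_stepb /= uj inordK // zb.
- case: ifP => [j0|/negbT j0]; last by rewrite /cover_stepb /= uj inordK.
  have [uL no1] := last_oneP uj.
  by rewrite /cover_stepb /= uL inordK.
- by case zb: (zero_before u j); rewrite /cover_stepb /= uj inordK // zb.
Qed.

Lemma step_of_surj u i c : triword u -> cover_stepb u i c -> exists j, step_of u j = (i, c).
Proof.
move=> Tu; rewrite /cover_stepb; have := letter_lt3 u i.
have pair_inord (d : 'I_3) (k : nat) : val d = k -> (i, inord k) = (i, d).
  by move=> <-; rewrite inord_val.
case ui: (letter u i) => [|[|[|//]]] _; case: c => -[|[|[|//]]] c3 //= M.
- by exists i; rewrite /step_of ui (negbTE M); apply: pair_inord.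
- by exists i; rewrite /step_of ui M; apply: pair_inord.
- pose j : 'I_n := Ordinal (leq_ltn_trans (leq0n i) (ltn_ord i)).
  have [first later] := triwordP _ Tu.
  have uj : letter u j = 1.
    have := letter_lt3 u j; case uj: (letter u j) => [|[|[|//]]] // _.
      have ji : j < i.
        rewrite /= lt0n; apply/eqP => i0.
        by move: ui; rewrite (_ : i = j) ?uj //; apply: val_inj.
      by move: (later j i ji uj); rewrite ui.
    by move: (first j erefl); rewrite uj.
  exists j; rewrite /step_of uj /= (last_one_eq uj ui M).
  by apply: pair_inord.
- by exists i; rewrite /step_of ui (negbTE M); apply: pair_inord.
- by exists i; rewrite /step_of ui M; apply: pair_inord.
- by exists i; rewrite /step_of ui (negbTE M); apply: pair_inord.
Qed.

Lemma upd_inj u i i' c c' :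
  c != tnth u i -> c' != tnth u i' -> upd u i c = upd u i' c' -> (i, c) = (i', c').
Proof.
move=> ne ne' E; have := letter_upd u i c i; rewrite E letter_upd eqxx.
case: (i =P i') => [<-|_] ci; last by move: ne; rewrite -val_eqE /= -ci eqxx.
by congr pair; apply: val_inj; rewrite /= ci.
Qed.

Definition neighbor u j : word n := upd u (step_of u j).1 (step_of u j).2.

Lemma adjacent_neighbor u v : triword u -> adjacent u v <-> exists j, v = neighbor u j.
Proof.
move=> Tu; rewrite adjacentP //; split=> [[i [c [/cover_stepP step ->]]]|[j ->]].
  by have [j Ej] := step_of_surj Tu (step Tu); exists j; rewrite /neighbor Ej.
by exists (step_of u j).1, (step_of u j).2; split=> //; apply/cover_stepP/cover_stepb_step_of.
Qed.

Lemma neighbor_inj u : triword u -> injective (neighbor u).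
Proof.
move=> Tu j1 j2 E; apply: step_of_inj.
have ne j : (step_of u j).2 != tnth u (step_of u j).1.
  by case/(cover_stepP _ _ Tu): (cover_stepb_step_of u j).
by rewrite [LHS]surjective_pairing [RHS]surjective_pairing; apply: upd_inj E.
Qed.

Lemma card_adjacent u : triword u -> #|[pred v | adjacent u v]| = n.
Proof.
move=> Tu; rewrite -[RHS]card_ord -(card_codom (neighbor_inj Tu)).
by apply: eq_card => v; rewrite !inE; apply/idP/codomP => /(adjacent_neighbor _ Tu).
Qed.

Lemma tr_in_add_out u : tr_in u + tr_out u = #|[pred v | adjacent u v]|.
Proof.
rewrite /tr_in /tr_out addnC -cardUI (eq_card0 (A := [predI _ & _])) ?addn0 //.
move=> v; rewrite !inE; apply/andP => -[/and4P[_ _ uv _] /and4P[_ _ vu _]].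
by move: (wlt_antisym uv); rewrite vu.
Qed.

End Words.

Theorem lemma3p4 (n : nat) (u : word n) :
  1 <= n -> triword u -> tr_in u + tr_out u = n.
Proof.
by move=> _ Tu; rewrite tr_in_add_out card_adjacent.
Qed.
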